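(* Under the standing assumptions, let $i,j\in I$ with $i\ne j$ and $d_X(e_i,e)\ge d_X(e_j,e)$. Then every path in $X$ from a point of $X_i$ to a point of $X_j$ meets $B(e_i;4M)$.
   Context: Standing assumptions: $X$ is a geodesic metric space with the RBP with respect to pieces $\{X_i:i\in I\}$ and constant $M>0$. Here $B(x;r)=\{z:d(x,z)<r\}$, $N_r(A)=\{z:d(z,A)\le r\}$, and RBP means: $X=\bigcup_i X_i$ and for all $i\neq j$ there is a fixed finite ordered set $I_{i,j}=\{i=i_0,i_1,\dots,i_s=j\}\subseteq I$ and points $w_r\in X_{i_r}\cap X_{i_{r+1}}$ ($0\le r<s$), forming the set $W_{i,j}$, such that every path in $X$ from $X_i$ to $X_j$ meets each $B(w_r;M)$. Moreover: a point $e\in X$ lies in exactly one piece, indexed $e\in I$ (so $X_e$); with $b=15M$, for every open ball $B$ and every $i$ with $\operatorname{diam}(B\cap X_i)\le 2b$, $X_i\setminus B$ is path-connected. For $i\ne e$, $e_i\in X_i$ is the point $w_0\in W_{i,e}$ (so every path from $X_i$ to $X_e$ meets $B(e_i;M)$); $e_e:=e$. *)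

From Stdlib Require Import Reals Lra List Classical ClassicalEpsilon.
Open Scope R_scope.
Set Implicit Arguments.

Definition is_metric {X : Type} (d : X -> X -> R) : Prop :=
  (forall x y, 0 <= d x y) /\
  (forall x y, d x y = 0 <-> x = y) /\
  (forall x y, d x y = d y x) /\
  (forall x y z, d x z <= d x y + d y z).

Definition geodesic {X : Type} (d : X -> X -> R) : Prop :=
  forall x y, exists g : R -> X,
    g 0 = x /\ g (d x y) = y /\
    forall s t, 0 <= s <= d x y -> 0 <= t <= d x y ->
      d (g s) (g t) = Rabs (s - t).

Definition ball {X : Type} (d : X -> X -> R) (x : X) (r : R) (z : X) : Prop :=
  d x z < r.

Definition is_path {X : Type} (d : X -> X -> R) (g : R -> X) : Prop :=
  forall t, 0 <= t <= 1 -> forall eps, 0 < eps ->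
    exists delta, 0 < delta /\
      forall s, 0 <= s <= 1 -> Rabs (s - t) < delta -> d (g t) (g s) < eps.

Definition path_meets {X : Type} (g : R -> X) (A : X -> Prop) : Prop :=
  exists t, 0 <= t <= 1 /\ A (g t).

(* RBP with respect to pieces Xs and constant M; the data chain i j = I_{i,j}
   (as an ordered list i = i_0, ..., i_s = j) and wp i j = W_{i,j}
   (the list w_0, ..., w_{s-1}) is fixed. *)
Definition RBP {X I : Type} (d : X -> X -> R) (Xs : I -> X -> Prop) (M : R)
  (chain : I -> I -> list I) (wp : I -> I -> list X) : Prop :=
  (forall x, exists i, Xs i x) /\
  forall i j, i <> j ->
    NoDup (chain i j) /\
    length (chain i j) = S (length (wp i j)) /\
    nth 0 (chain i j) i = i /\
    nth (length (wp i j)) (chain i j) i = j /\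
    forall r x0, (r < length (wp i j))%nat ->
      Xs (nth r (chain i j) i) (nth r (wp i j) x0) /\
      Xs (nth (S r) (chain i j) i) (nth r (wp i j) x0) /\
      forall g, is_path d g -> Xs i (g 0) -> Xs j (g 1) ->
        path_meets g (ball d (nth r (wp i j) x0) M).

(* The additional standing assumptions: e lies in exactly one piece, indexed eI;
   with b = 15M, for every open ball B and every piece X_i with
   diam(B ∩ X_i) <= 2b, X_i \ B is path-connected. *)
Definition standing_extra {X I : Type} (d : X -> X -> R) (Xs : I -> X -> Prop)
  (M : R) (e : X) (eI : I) : Prop :=
  Xs eI e /\ (forall k, Xs k e -> k = eI) /\
  let b := 15 * M in
  forall (x : X) (r : R) (i : I), 0 < r ->
    (forall y z, Xs i y -> ball d x r y -> Xs i z -> ball d x r z -> d y z <= 2 * b) ->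
    forall y z, Xs i y -> ~ ball d x r y -> Xs i z -> ~ ball d x r z ->
      exists g, is_path d g /\ g 0 = y /\ g 1 = z /\
        forall t, 0 <= t <= 1 -> Xs i (g t) /\ ~ ball d x r (g t).

Definition e_pt {X I : Type} (wp : I -> I -> list X) (e : X) (eI : I) (i : I) : X :=
  if excluded_middle_informative (i = eI) then e else nth 0 (wp i eI) e.

From Stdlib Require Import Reals List.
From Stdlib Require Import Lra Lia Classical ClassicalEpsilon.
Open Scope R_scope.

(* The case i = e is impossible (it would force e_j = e, hence j = e), and
   the case j = e is the RBP gate B(e_i; M) itself.  For i, j <> e:
   - if d(e_i, e_j) < 2M, a geodesic from e_i to e_j passes through the first
     gate B(w; M) of W_{i,j}, so w lies within 3M of e_i, and the given path
     also meets B(w; M) ("near case");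
   - if d(e_i, e_j) >= 2M and the path stayed outside B(e_i; 4M), continue it
     inside X_j \ B(e_i; 2M) (path-connected by the standing assumption) to
     e_j and then along a geodesic to e.  This path from X_i to X_e must meet
     B(e_i; M), but none of its three pieces does ("far case"); for the
     geodesic this uses d(e_j, e) <= d(e_i, e). *)

Section MetricFacts.
Context {X : Type} {d : X -> X -> R} (Hmet : is_metric d).

Lemma dist_nonneg x y : 0 <= d x y.
Proof. apply Hmet. Qed.

Lemma dist_refl x : d x x = 0.
Proof. apply Hmet; reflexivity. Qed.

Lemma dist_eq0 x y : d x y = 0 -> x = y.
Proof. apply Hmet. Qed.

Lemma dist_sym x y : d x y = d y x.
Proof. apply Hmet. Qed.

Lemma dist_triangle x y z : d x z <= d x y + d y z.
Proof. apply Hmet. Qed.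

(* This keeps the geodesic from e_j to e away from e_i. *)
Lemma far_from_geodesic a b c q r :
  d b q + d q c = d b c -> d b c <= d a c -> 2 * r <= d a b -> r <= d a q.
Proof.
  intros Hq Hbc Hab.
  pose proof (dist_triangle a q c). pose proof (dist_triangle a q b).
  pose proof (dist_sym q b). lra.
Qed.

End MetricFacts.

Lemma path_meets_weaken {X : Type} (g : R -> X) (A B : X -> Prop) :
  (forall x, A x -> B x) -> path_meets g A -> path_meets g B.
Proof. intros HAB [t [Ht Hg]]; exists t; auto. Qed.

Lemma Rabs_lt_intro (x a : R) : -a < x -> x < a -> Rabs x < a.
Proof. intros; apply Rabs_def1; auto. Qed.

Section Concatenation.
Context {X : Type} {d : X -> X -> R} (Hmet : is_metric d).

Definition concat (g1 g2 : R -> X) (t : R) : X :=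
  if Rle_dec t (1/2) then g1 (2*t) else g2 (2*t-1).

Context {g1 g2 : R -> X} (P1 : is_path d g1) (P2 : is_path d g2)
  (Hjoin : g1 1 = g2 0).

(* Continuity of the concatenation on the first half: near t, points of the
   second half are controlled through the junction g1 1 = g2 0. *)
Lemma concat_continuous_left t : 0 <= t <= 1/2 -> forall eps, 0 < eps ->
  exists delta, 0 < delta /\ forall s, 0 <= s <= 1 -> Rabs (s - t) < delta ->
    d (concat g1 g2 t) (concat g1 g2 s) < eps.
Proof.
  intros Ht eps He.
  destruct (P1 (2*t) ltac:(lra) (eps/2) ltac:(lra)) as [d1 [Hd1 C1]].
  destruct (P2 0 ltac:(lra) (eps/2) ltac:(lra)) as [d2 [Hd2 C2]].
  pose proof (Rmin_l d1 d2); pose proof (Rmin_r d1 d2).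
  pose proof (Rmin_pos d1 d2 Hd1 Hd2).
  exists (Rmin d1 d2 / 2); split; [lra|].
  intros s Hs Hst; apply Rabs_def2 in Hst.
  unfold concat; destruct (Rle_dec t (1/2)); [|lra].
  destruct (Rle_dec s (1/2)).
  - assert (d (g1 (2*t)) (g1 (2*s)) < eps/2)
      by (apply C1; [lra | apply Rabs_lt_intro; lra]). lra.
  - assert (d (g1 (2*t)) (g1 1) < eps/2)
      by (apply C1; [lra | apply Rabs_lt_intro; lra]).
    assert (d (g2 0) (g2 (2*s-1)) < eps/2)
      by (apply C2; [lra | apply Rabs_lt_intro; lra]).
    rewrite Hjoin in *.
    pose proof (dist_triangle Hmet (g1 (2*t)) (g2 0) (g2 (2*s-1))). lra.
Qed.

Lemma concat_continuous_right t : 1/2 < t <= 1 -> forall eps, 0 < eps ->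
  exists delta, 0 < delta /\ forall s, 0 <= s <= 1 -> Rabs (s - t) < delta ->
    d (concat g1 g2 t) (concat g1 g2 s) < eps.
Proof.
  intros Ht eps He.
  destruct (P2 (2*t-1) ltac:(lra) (eps/2) ltac:(lra)) as [d1 [Hd1 C1]].
  destruct (P1 1 ltac:(lra) (eps/2) ltac:(lra)) as [d2 [Hd2 C2]].
  pose proof (Rmin_l d1 d2); pose proof (Rmin_r d1 d2).
  pose proof (Rmin_pos d1 d2 Hd1 Hd2).
  exists (Rmin d1 d2 / 2); split; [lra|].
  intros s Hs Hst; apply Rabs_def2 in Hst.
  unfold concat; destruct (Rle_dec t (1/2)); [lra|].
  destruct (Rle_dec s (1/2)).
  - assert (d (g2 (2*t-1)) (g2 0) < eps/2)
      by (apply C1; [lra | apply Rabs_lt_intro; lra]).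
    assert (d (g1 1) (g1 (2*s)) < eps/2)
      by (apply C2; [lra | apply Rabs_lt_intro; lra]).
    rewrite Hjoin in *.
    pose proof (dist_triangle Hmet (g2 (2*t-1)) (g2 0) (g1 (2*s))). lra.
  - assert (d (g2 (2*t-1)) (g2 (2*s-1)) < eps/2)
      by (apply C1; [lra | apply Rabs_lt_intro; lra]). lra.
Qed.

Lemma concat_path : is_path d (concat g1 g2).
Proof.
  intros t Ht.
  destruct (Rle_dec t (1/2)).
  - apply concat_continuous_left; lra.
  - apply concat_continuous_right; lra.
Qed.

End Concatenation.

Lemma concat_0 {X : Type} (g1 g2 : R -> X) : concat g1 g2 0 = g1 0.
Proof. unfold concat; destruct (Rle_dec 0 (1/2)); [f_equal; ring | lra]. Qed.

Lemma concat_1 {X : Type} (g1 g2 : R -> X) : concat g1 g2 1 = g2 1.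
Proof. unfold concat; destruct (Rle_dec 1 (1/2)); [lra | f_equal; ring]. Qed.

Lemma concat_meets {X : Type} {g1 g2 : R -> X} {A : X -> Prop} :
  path_meets (concat g1 g2) A -> path_meets g1 A \/ path_meets g2 A.
Proof.
  intros [t [Ht HA]]; unfold concat in HA.
  destruct (Rle_dec t (1/2)).
  - left; exists (2*t); split; [lra | exact HA].
  - right; exists (2*t-1); split; [lra | exact HA].
Qed.

Lemma geodesic_path {X : Type} {d : X -> X -> R} (Hmet : is_metric d)
  (Hgeo : geodesic d) x y :
  exists p, is_path d p /\ p 0 = x /\ p 1 = y /\
    forall t, 0 <= t <= 1 -> d x (p t) + d (p t) y = d x y.
Proof.
  destruct (Hgeo x y) as [gg [G0 [G1 Giso]]].
  set (D := d x y) in *.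
  assert (HD : 0 <= D) by apply (dist_nonneg Hmet).
  exists (fun t => gg (t * D)); repeat split.
  - intros t Ht eps He.
    assert (Hdel : 0 < eps / (D+1)) by (apply Rdiv_lt_0_compat; lra).
    assert (Hdel1 : eps / (D+1) * (D+1) = eps) by (field; lra).
    exists (eps / (D+1)); split; [exact Hdel|].
    intros s Hs Hst; apply Rabs_def2 in Hst.
    rewrite Giso by nra. apply Rabs_lt_intro; nra.
  - rewrite Rmult_0_l; exact G0.
  - rewrite Rmult_1_l; exact G1.
  - intros t Ht.
    rewrite <- G0 at 1; rewrite <- G1 at 1.
    rewrite !Giso by nra.
    rewrite Rabs_left1 by nra. rewrite Rabs_left1 by nra. ring.
Qed.

Lemma e_pt_eI {X I : Type} (wp : I -> I -> list X) (e : X) (eI : I) :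
  e_pt wp e eI eI = e.
Proof.
  unfold e_pt; destruct (excluded_middle_informative (eI = eI)); congruence.
Qed.

Section StandingAssumptions.
Context {X I : Type} {d : X -> X -> R} {Xs : I -> X -> Prop} {M : R}
  {chain : I -> I -> list I} {wp : I -> I -> list X} {e : X} {eI : I}.
Context (Hmet : is_metric d) (Hgeo : geodesic d) (HM : 0 < M)
  (Hrbp : RBP d Xs M chain wp) (Hext : standing_extra d Xs M e eI).

Lemma rbp_first_gate {i j} x0 : i <> j ->
  Xs i (nth 0 (wp i j) x0) /\
  forall g, is_path d g -> Xs i (g 0) -> Xs j (g 1) ->
    path_meets g (ball d (nth 0 (wp i j) x0) M).
Proof.
  intros Hij. destruct Hrbp as [_ H].
  destruct (H i j Hij) as [_ [_ [Hhead [Hlast Hgates]]]].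
  destruct (length (wp i j)) as [|n] eqn:Hlen.
  - rewrite Hhead in Hlast; congruence.
  - destruct (Hgates 0%nat x0 ltac:(lia)) as [Hw [_ Hmeet]].
    rewrite Hhead in Hw; auto.
Qed.

Lemma e_pt_piece k : Xs k (e_pt wp e eI k).
Proof.
  unfold e_pt; destruct (excluded_middle_informative (k = eI)) as [->|Hk].
  - apply Hext.
  - apply (rbp_first_gate e Hk).
Qed.

Lemma e_pt_eq_e k : e_pt wp e eI k = e -> k = eI.
Proof. intros Hk. apply Hext. rewrite <- Hk. apply e_pt_piece. Qed.

Lemma e_pt_gate {i} : i <> eI ->
  forall g, is_path d g -> Xs i (g 0) -> Xs eI (g 1) ->
    path_meets g (ball d (e_pt wp e eI i) M).
Proof.
  intros Hi. unfold e_pt.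
  destruct (excluded_middle_informative (i = eI)); [contradiction|].
  apply (rbp_first_gate e Hi).
Qed.

(* Removing a ball of radius r <= 15M from a piece leaves it path-connected,
   since the part of the piece inside the ball has diameter <= 2r <= 2b. *)
Lemma piece_minus_ball_connected a {r} k {y z} : 0 < r -> r <= 15 * M ->
  Xs k y -> ~ ball d a r y -> Xs k z -> ~ ball d a r z ->
    exists h, is_path d h /\ h 0 = y /\ h 1 = z /\
      forall t, 0 <= t <= 1 -> Xs k (h t) /\ ~ ball d a r (h t).
Proof.
  intros Hr Hr15. destruct Hext as [_ [_ Hconn]]. apply Hconn; [exact Hr|].
  intros u v _ Hu _ Hv; unfold ball in *.
  pose proof (dist_triangle Hmet u a v). pose proof (dist_sym Hmet u a). lra.
Qed.

(* Near case: if a in X_i is within 2M of some point of X_j, the first gate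
   of W_{i,j} lies within 3M of a, so every path from X_i to X_j meets
   B(a; 4M). *)
Lemma near_case {i j a b} : i <> j -> Xs i a -> Xs j b -> d a b < 2 * M ->
  forall g, is_path d g -> Xs i (g 0) -> Xs j (g 1) ->
    path_meets g (ball d a (4 * M)).
Proof.
  intros Hij Ha Hb Hab g Hg H0 H1.
  destruct (rbp_first_gate a Hij) as [_ Hgate].
  set (w := nth 0 (wp i j) a) in *.
  destruct (geodesic_path Hmet Hgeo a b) as [p [Hp [P0 [P1 Pgeo]]]].
  destruct (Hgate p Hp) as [t [Ht Hpt]]; [congruence | congruence |].
  destruct (Hgate g Hg H0 H1) as [s [Hs Hgs]].
  exists s; split; [exact Hs|]; unfold ball in *.
  pose proof (Pgeo t Ht). pose proof (dist_nonneg Hmet (p t) b).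
  pose proof (dist_triangle Hmet a (p t) (g s)).
  pose proof (dist_triangle Hmet (p t) w (g s)).
  pose proof (dist_sym Hmet (p t) w). lra.
Qed.

(* Far case: if every path from X_i to X_e meets B(a; M), b in X_j is at
   distance >= 2M from a and d(b,e) <= d(a,e), then every path from X_i to
   X_j meets B(a; 4M); otherwise extending it through X_j \ B(a; 2M) to b and
   along a geodesic to e gives a path from X_i to X_e avoiding B(a; M). *)
Lemma far_case {i j a b} :
  (forall g, is_path d g -> Xs i (g 0) -> Xs eI (g 1) ->
     path_meets g (ball d a M)) ->
  Xs j b -> 2 * M <= d a b -> d b e <= d a e ->
  forall g, is_path d g -> Xs i (g 0) -> Xs j (g 1) ->
    path_meets g (ball d a (4 * M)).
Proof.
  intros Hgate Hb Hab Hbe g Hg H0 H1.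
  apply NNPP; intros Hmiss.
  assert (Far : forall t, 0 <= t <= 1 -> 4 * M <= d a (g t)).
  { intros t Ht. apply Rnot_lt_le; intros Hlt. apply Hmiss; exists t; auto. }
  assert (Hg1 : ~ ball d a (2 * M) (g 1))
    by (unfold ball; pose proof (Far 1 ltac:(lra)); lra).
  assert (Hb' : ~ ball d a (2 * M) b) by (unfold ball; lra).
  destruct (piece_minus_ball_connected a (r := 2 * M) j ltac:(lra) ltac:(lra)
              H1 Hg1 Hb Hb') as [h [Hh [Hh0 [Hh1 Havoid]]]].
  destruct (geodesic_path Hmet Hgeo b e) as [p [Hp [P0 [P1 Pgeo]]]].
  assert (Hpath : is_path d (concat g (concat h p))).
  { apply (concat_path Hmet); [exact Hg | | rewrite concat_0; congruence].
    apply (concat_path Hmet); [exact Hh | exact Hp | congruence]. }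
  assert (Hmeet : path_meets (concat g (concat h p)) (ball d a M)).
  { apply Hgate; [exact Hpath | rewrite concat_0; exact H0 |].
    rewrite !concat_1, P1; apply Hext. }
  destruct (concat_meets Hmeet) as [[t [Ht Hin]] | Hrest]; unfold ball in *.
  { pose proof (Far t Ht); lra. }
  destruct (concat_meets Hrest) as [[t [Ht Hin]] | [t [Ht Hin]]].
  - apply (proj2 (Havoid t Ht)); unfold ball; lra.
  - pose proof (far_from_geodesic Hmet a b e (p t) M (Pgeo t Ht) Hbe Hab).
    lra.
Qed.

End StandingAssumptions.

Theorem lemma3p2 (X I : Type) (d : X -> X -> R) (Xs : I -> X -> Prop) (M : R)
  (chain : I -> I -> list I) (wp : I -> I -> list X) (e : X) (eI : I)
  (Hmet : is_metric d) (Hgeo : geodesic d) (HM : 0 < M)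
  (Hrbp : RBP d Xs M chain wp) (Hext : standing_extra d Xs M e eI)
  (i j : I) (Hij : i <> j)
  (Hdist : d (e_pt wp e eI i) e >= d (e_pt wp e eI j) e)
  (g : R -> X) (Hg : is_path d g) (H0 : Xs i (g 0)) (H1 : Xs j (g 1)) :
  path_meets g (ball d (e_pt wp e eI i) (4 * M)).
Proof.
  (* i = e would force d(e_j, e) = 0, i.e. e_j = e and j = e = i. *)
  assert (Hi : i <> eI).
  { intros ->. apply Hij, eq_sym, (e_pt_eq_e Hrbp Hext), (dist_eq0 Hmet).
    rewrite e_pt_eI, (dist_refl Hmet) in Hdist.
    pose proof (dist_nonneg Hmet (e_pt wp e eI j) e). lra. }
  set (ei := e_pt wp e eI i) in *; set (ej := e_pt wp e eI j) in *.
  destruct (classic (j = eI)) as [-> | Hj].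
  - (* j = e: the gate B(e_i; M) of W_{i,e} already suffices. *)
    apply path_meets_weaken with (ball d ei M); [unfold ball; intros; lra|].
    apply (e_pt_gate Hrbp Hi); assumption.
  - destruct (Rlt_le_dec (d ei ej) (2 * M)) as [Hnear | Hfar].
    + (* e_i and e_j are close: the first gate of W_{i,j} is near e_i. *)
      apply (near_case Hmet Hgeo Hrbp Hij (e_pt_piece Hrbp Hext i)
               (e_pt_piece Hrbp Hext j) Hnear); assumption.
    + (* e_i and e_j are far apart: detour through X_j to e_j and on to e. *)
      apply (far_case Hmet Hgeo HM Hext (e_pt_gate Hrbp Hi)
               (e_pt_piece Hrbp Hext j) Hfar); [fold ei ej; lra | assumption..].
Qed.
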